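(* Let $S=\langle P,\varphi\rangle$ be a SUT model, $t$ a strength and $N\ge1$ an integer. The optimal cost of the Partial MaxSAT instance $TPMSat_{CCX}^{N,t,S}$ (defined in the context) is $|\mathcal T_a|-T(N;t,S)$.
   Context: A SUT model is $S=\langle P,\varphi\rangle$, where $P$ is a finite set of parameters, each $p\in P$ having a finite nonempty domain $d(p)$, and $\varphi$ is a propositional formula whose atoms have the form $(p=v)$ with $p\in P$, $v\in d(p)$. A test case is a full assignment $A$ giving each $p$ a value in $d(p)$ such that $\varphi$ is true when each atom $(p=v)$ is read as true iff $A(p)=v$; it is assumed that at least one test case exists. Fix a strength $t$ with $1\le t\le|P|$. A $t$-tuple is an assignment of values to exactly $t$ distinct parameters, viewed as a set of pairs $(p,v)$; a test case covers $\tau$ if it assigns $v$ to $p$ for every $(p,v)\in\tau$. A $t$-tuple is allowed if some test case covers it; $\mathcal T_a$ is the set of allowed $t$-tuples. The Tuple Number $T(N;t,S)$ is the maximum number of $t$-tuples covered (each by at least one member) by a list of $N$ test cases. $[N]=\{1,\dots,N\}$. A Partial MaxSAT instance consists of hard constraints and soft clauses $(c,w)$ with positive integer weights; its optimal cost is the minimum, over truth assignments satisfying all hard constraints, of the total weight of falsified soft clauses ($\infty$ if the hard constraints are unsatisfiable). Variables: $x_{i,p,v}$ ($i\in[N]$, $p\in P$, $v\in d(p)$), $c^i_\tau$ ($i\in\{0,\dots,N\}$, $\tau\in\mathcal T_a$). Hard constraints of $TPMSat_{CCX}^{N,t,S}$: (X) for every $i\in[N]$, $p\in P$: exactly one of $\{x_{i,p,v}:v\in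 d(p)\}$ is true; (SUTX) for every $i\in[N]$: the formula obtained from $\varphi$ by replacing each atom $(p=v)$ with $x_{i,p,v}$; (a) for every $i\in[N]$, $\tau\in\mathcal T_a$, $(p,v)\in\tau$: $c^i_\tau\rightarrow(c^{i-1}_\tau\vee x_{i,p,v})$; (c) for every $\tau\in\mathcal T_a$: $c^N_\tau\rightarrow\neg c^0_\tau$. Soft clauses: $(c^N_\tau,1)$ for every $\tau\in\mathcal T_a$. *)

From HB Require Import structures.
From mathcomp Require Import all_boot.

Set Implicit Arguments.
Unset Strict Implicit.
Unset Printing Implicit Defensive.

Inductive form (A : Type) : Type :=
  | FVar of A
  | FTop
  | FBot
  | FNot of form A
  | FAnd of form A & form A
  | FOr of form A & form A
  | FImp of form A & form A.

Arguments FTop {A}.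
Arguments FBot {A}.

Fixpoint eval (A : Type) (val : A -> bool) (f : form A) : bool :=
  match f with
  | FVar a => val a
  | FTop => true
  | FBot => false
  | FNot g => ~~ eval val g
  | FAnd g h => eval val g && eval val h
  | FOr g h => eval val g || eval val h
  | FImp g h => eval val g ==> eval val h
  end.

Fixpoint fmap (A B : Type) (s : A -> B) (f : form A) : form B :=
  match f with
  | FVar a => FVar (s a)
  | FTop => FTop
  | FBot => FBot
  | FNot g => FNot (fmap s g)
  | FAnd g h => FAnd (fmap s g) (fmap s h)
  | FOr g h => FOr (fmap s g) (fmap s h)
  | FImp g h => FImp (fmap s g) (fmap s h)
  end.

Definition bigOr (A : Type) (s : seq (form A)) : form A := foldr (@FOr A) FBot s.
Definition bigAnd (A : Type) (s : seq (form A)) : form A := foldr (@FAnd A) FTop s.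

Fixpoint at_most_one (A : Type) (s : seq A) : form A :=
  match s with
  | [::] => FTop
  | a :: s' => FAnd (bigAnd [seq FNot (FAnd (FVar a) (FVar b)) | b <- s'])
                    (at_most_one s')
  end.

Definition exactly_one (A : Type) (s : seq A) : form A :=
  FAnd (bigOr [seq FVar a | a <- s]) (at_most_one s).

Record pmaxsat (V : Type) := PMaxSat {
  hard : seq (form V);
  soft : seq (form V * nat)  (* (clause, positive weight) *)
}.

Definition sat_hard (V : Type) (I : pmaxsat V) (val : V -> bool) : bool :=
  all (eval val) (hard I).

Definition soft_cost (V : Type) (I : pmaxsat V) (val : V -> bool) : nat :=
  \sum_(cw <- soft I | ~~ eval val cw.1) cw.2.

Definition is_opt_cost (V : Type) (I : pmaxsat V) (k : nat) : Prop :=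
  (exists val : V -> bool, sat_hard I val /\ soft_cost I val = k) /\
  (forall val : V -> bool, sat_hard I val -> k <= soft_cost I val).

(* SUT models: parameters P (finite), domains D p (finite), formula phi *)
(* over atoms (p = v), an atom being a dependent pair (p ; v).          *)
Section SUT.
Variables (P : finType) (D : P -> finType).

Definition atom := {p : P & D p}.
Definition assignment := {dffun forall p : P, D p}.

Definition atom_true (A : assignment) (a : atom) : bool := A (tag a) == tagged a.

Definition test_case (phi : form atom) (A : assignment) : bool :=
  eval (atom_true A) phi.

Definition is_ttuple (t : nat) (tau : {set atom}) : bool :=
  (#|tau| == t) &&
  [forall a in tau, forall b in tau, (tag a == tag b) ==> (a == b)].

Definition covers (A : assignment) (tau : {set atom}) : bool :=
  [forall a in tau, atom_true A a].

Definition allowed (phi : form atom) (t : nat) (tau : {set atom}) : bool :=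
  is_ttuple t tau && [exists A : assignment, test_case phi A && covers A tau].

Definition Ta (phi : form atom) (t : nat) : {set {set atom}} :=
  [set tau | allowed phi t tau].

(* the same set, as a finite type (indexing the variables c^i_tau) *)
Definition ttup (phi : form atom) (t : nat) := {tau : {set atom} | allowed phi t tau}.
HB.instance Definition _ phi t :=
  Finite.copy (ttup phi t) {tau : {set atom} | allowed phi t tau}.

Definition n_covered (t N : nat) (L : {ffun 'I_N -> assignment}) : nat :=
  #|[set tau : {set atom} | is_ttuple t tau && [exists i, covers (L i) tau]]|.

Definition tuple_number (phi : form atom) (t N : nat) : nat :=
  \max_(L : {ffun 'I_N -> assignment} | [forall i, test_case phi (L i)])
     n_covered t L.

(* Variables of TPMSat_CCX: x_{i,p,v} and c^i_tau. Indices i are natural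
   numbers with the paper's ranges (i in [N] = 1..N for x, i in 0..N for c);
   only these occur in the instance. *)
Inductive ccx_var (phi : form atom) (t : nat) :=
  | xv of nat & atom
  | cv of nat & ttup phi t.

Definition TPMSat_CCX (phi : form atom) (t N : nat) : pmaxsat (ccx_var phi t) :=
  let X i a := @xv phi t i a in
  let C i tau := @cv phi t i tau in
  PMaxSat
    (
      [seq exactly_one [seq X i (Tagged D v) | v <- enum (D p)]
         | i <- iota 1 N, p <- enum P]
   ++
      [seq fmap (X i) phi | i <- iota 1 N]
   ++
      flatten [seq [seq FImp (FVar (C i tau)) (FOr (FVar (C i.-1 tau)) (FVar (X i a)))
                      | tau <- enum [set: ttup phi t], a <- enum (val tau)]
                 | i <- iota 1 N]
   ++
      [seq FImp (FVar (C N tau)) (FNot (FVar (C 0 tau)))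
         | tau <- enum [set: ttup phi t]])
    [seq (FVar (C N tau), 1) | tau <- enum [set: ttup phi t]].

End SUT.

From mathcomp Require Import all_boot zify.

(* Satisfying assignments of the hard constraints are lists of N test cases
   with bookkeeping: (X) and (SUTX) make each row x_i a test case, and (a)
   only lets c^i_tau hold if c^(i-1)_tau does or test case i covers tau, so
   by induction together with (c) every tau with c^N_tau true is covered by
   the list.  Conversely, reading c^i_tau as "tau is covered by one of the
   first i test cases" satisfies all hard constraints and falsifies exactly
   the soft clauses of uncovered tuples.  The optimum is therefore the least
   number of allowed tuples left uncovered by N test cases. *)

Set Implicit Arguments.
Unset Strict Implicit.
Unset Printing Implicit Defensive.

Lemma all_flatten (T : Type) (p : pred T) (ss : seq (seq T)) :
  all p (flatten ss) = all (all p) ss.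
Proof. by elim: ss => //= s ss IH; rewrite all_cat IH. Qed.

Section Formulas.
Variables (A : Type) (v : A -> bool).

Lemma eval_bigAnd s : eval v (bigAnd s) = all (eval v) s.
Proof. by elim: s => //= f s ->. Qed.

Lemma eval_bigOr s : eval v (bigOr s) = has (eval v) s.
Proof. by elim: s => //= f s ->. Qed.

Lemma eq_eval (w : A -> bool) f : v =1 w -> eval v f = eval w f.
Proof. by move=> vw; elim: f => //= [g -> | g -> h -> | g -> h -> | g -> h ->]. Qed.

Lemma eval_fmap (B : Type) (s : B -> A) f : eval v (fmap s f) = eval (v \o s) f.
Proof. by elim: f => //= [g -> | g -> h -> | g -> h -> | g -> h ->]. Qed.

Variables (T : eqType) (f : T -> A).

Lemma at_most_oneP s : uniq s ->
  reflect {in s &, forall a b, v (f a) -> v (f b) -> a = b}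
          (eval v (at_most_one (map f s))).
Proof.
elim: s => [_ | a s IH /andP [a_s s_uniq]]; first by constructor.
rewrite /= -/(bigAnd _) eval_bigAnd !all_map.
apply: (iffP andP) => [[a_excl /(IH s_uniq) s_inj] | inj].
  move/allP: a_excl => a_excl x y.
  rewrite !inE => /predU1P [-> | xs] /predU1P [-> | ys] vx vy //.
  - by have := a_excl _ ys; rewrite /= vx vy.
  - by have := a_excl _ xs; rewrite /= vx vy.
  - exact: s_inj.
split.
  apply/allP => b bs /=; apply/negP => /andP [va vb].
  by move: a_s; rewrite (inj a b (mem_head _ _) _ va vb) ?bs // inE bs orbT.
by apply/(IH s_uniq) => x y xs ys; apply: inj; rewrite inE ?xs ?ys orbT.
Qed.

Lemma eval_exactly_one_map s :
  eval v (exactly_one (map f s)) = has (v \o f) s && eval v (at_most_one (map f s)).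
Proof. by rewrite /= eval_bigOr -map_comp has_map. Qed.

End Formulas.

Section CCX.
Variables (P : finType) (D : P -> finType) (phi : form (atom D)) (t : nat).

Local Notation X := (@xv P D phi t).
Local Notation C := (@cv P D phi t).

Definition ccx_hard N (nu : ccx_var phi t -> bool) : Prop :=
  [/\ forall i p, 1 <= i <= N ->
        eval nu (exactly_one [seq X i (Tagged D v) | v <- enum (D p)]),
      forall i, 1 <= i <= N -> eval (nu \o X i) phi,
      forall i (tau : ttup phi t) a, 1 <= i <= N -> a \in val tau ->
        nu (C i tau) -> nu (C i.-1 tau) || nu (X i a)
    & forall tau, nu (C N tau) -> ~~ nu (C 0 tau)].

Lemma sat_hard_ccxP N nu : sat_hard (TPMSat_CCX phi t N) nu <-> ccx_hard N nu.
Proof.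
have mem_rows i : (i \in iota 1 N) = (1 <= i <= N) by rewrite mem_iota add1n ltnS.
rewrite /sat_hard /= !all_cat.
split => [/and4P [/all_allpairsP hX hS ha hc] | [hX hS ha hc]].
  move: hS ha hc; rewrite all_flatten !all_map => /allP hS /allP ha /allP hc.
  split.
  - by move=> i p Hi; apply: hX; rewrite ?mem_rows ?mem_enum.
  - by move=> i Hi; have /= := hS i; rewrite mem_rows eval_fmap => ->.
  - move=> i tau a; rewrite -mem_rows => /ha /all_allpairsP /(_ tau a) /=.
    by rewrite mem_enum in_setT mem_enum => /(_ isT) h /h /implyP.
  - by move=> tau; have := hc tau; rewrite mem_enum in_setT => /(_ isT) /implyP.
apply/and4P; split.
- by apply/all_allpairsP => i p; rewrite mem_rows => Hi _; apply: hX.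
- by rewrite all_map; apply/allP => i; rewrite mem_rows /= eval_fmap; apply: hS.
- rewrite all_flatten all_map; apply/allP => i; rewrite mem_rows => Hi.
  apply/all_allpairsP => tau a _; rewrite mem_enum => Ha.
  by apply/implyP; apply: ha.
- by rewrite all_map; apply/allP => tau _; apply/implyP; apply: hc.
Qed.

Lemma soft_cost_ccx N nu :
  soft_cost (TPMSat_CCX phi t N) nu = #|[pred u : ttup phi t | ~~ nu (C N u)]|.
Proof.
rewrite /soft_cost big_map big_enum_cond sum1_card.
by apply: eq_card => u; rewrite unfold_in in_setT.
Qed.

Definition test_suite N (L : {ffun 'I_N -> assignment D}) : bool :=
  [forall i, test_case phi (L i)].

Definition covered_by N (L : {ffun 'I_N -> assignment D}) (tau : {set atom D}) : bool :=
  [exists i, covers (L i) tau].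

Lemma card_ttup_uncovered N (L : {ffun 'I_N -> assignment D}) : test_suite L ->
  #|[pred u : ttup phi t | ~~ covered_by L (val u)]| = #|Ta phi t| - n_covered t L.
Proof.
move=> /forallP suite.
have -> : #|[pred u : ttup phi t | ~~ covered_by L (val u)]| =
          #|Ta phi t :\: [set tau | covered_by L tau]|.
  rewrite -(card_imset _ val_inj); apply: eq_card => tau; rewrite !inE.
  apply/imsetP/andP => [[u uncov ->] | [uncov tau_ok]].
    by rewrite (valP u); move: uncov; rewrite inE.
  by exists (Sub tau tau_ok); rewrite ?inE SubK.
rewrite cardsD; congr (_ - _); apply: eq_card => tau.
rewrite !inE /allowed -/(covered_by L tau).
case cov: (covered_by L tau); rewrite ?andbF ?andbT //.
have [i cov_i] := existsP cov.
suff -> : [exists A, test_case phi A && covers A tau] by rewrite andbT.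
by apply/existsP; exists (L i); rewrite suite cov_i.
Qed.

Lemma n_covered_le_tuple_number N (L : {ffun 'I_N -> assignment D}) :
  test_suite L -> n_covered t L <= tuple_number phi t N.
Proof. exact: leq_bigmax_cond. Qed.

Lemma tuple_number_attained N : (exists A, test_case phi A) ->
  exists2 L : {ffun 'I_N -> assignment D},
    test_suite L & n_covered t L = tuple_number phi t N.
Proof.
move=> [A tA].
have suite_exists : 0 < #|@test_suite N|.
  by apply/card_gt0P; exists [ffun=> A]; apply/forallP => i; rewrite ffunE.
have [L suiteL max_eq] := eq_bigmax_cond (@n_covered P D t N) suite_exists.
by exists L; last exact: esym max_eq.
Qed.

Section Encoding.
Variables (n : nat) (L : {ffun 'I_n.+1 -> assignment D}).
Hypothesis suiteL : test_suite L.

(* Row i >= 1 of the instance is test case i - 1 of L. *)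
Definition ccx_encode (v : ccx_var phi t) : bool :=
  match v with
  | xv i a => atom_true (L (inord i.-1)) a
  | cv i tau => [exists j : 'I_n.+1, (j < i) && covers (L j) (val tau)]
  end.

Lemma ccx_encode_hard : ccx_hard n.+1 ccx_encode.
Proof.
have row_inord i : 1 <= i <= n.+1 -> (inord i.-1 : 'I_n.+1) = i.-1 :> nat.
  by move=> Hi; rewrite inordK //; lia.
split.
- move=> i p _; rewrite eval_exactly_one_map; apply/andP; split.
    by apply/hasP; exists (L (inord i.-1) p); rewrite ?mem_enum //= /atom_true eqxx.
  apply/at_most_oneP; first exact: enum_uniq.
  by move=> v w _ _; rewrite /= /atom_true /= => /eqP <- /eqP <-.
- by move=> i _; apply: (forallP suiteL).
- move=> i tau a Hi a_tau /existsP [j /andP [j_i cov_j]] /=.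
  case: (ltnP j i.-1) => [j_lt | j_ge].
    by apply/orP; left; apply/existsP; exists j; rewrite j_lt cov_j.
  have -> : (inord i.-1 : 'I_n.+1) = j by apply: ord_inj; rewrite row_inord //; lia.
  by apply/orP; right; apply: (forall_inP cov_j).
- by move=> tau _; apply/negP => /existsP [].
Qed.

Lemma soft_cost_ccx_encode :
  soft_cost (TPMSat_CCX phi t n.+1) ccx_encode = #|Ta phi t| - n_covered t L.
Proof.
rewrite soft_cost_ccx -card_ttup_uncovered //; apply: eq_card => tau.
by rewrite !inE /=; congr (~~ _); apply: eq_existsb => j; rewrite ltn_ord.
Qed.

End Encoding.

Section Decoding.
Variables (n : nat) (A0 : assignment D) (nu : ccx_var phi t -> bool).
Hypothesis hard_nu : ccx_hard n.+1 nu.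

(* The default [A0 p] is never used: (X) makes the pick succeed. *)
Definition ccx_decode : {ffun 'I_n.+1 -> assignment D} :=
  [ffun j : 'I_n.+1 => [ffun p =>
     if [pick v | nu (X j.+1 (Tagged D v))] is Some v then v else A0 p : D p]].

Lemma atom_true_ccx_decode j a : atom_true (ccx_decode j) a = nu (X j.+1 a).
Proof.
case: a => p v; rewrite /atom_true /= !ffunE.
have [hX _ _ _] := hard_nu.
have := hX j.+1 p (ltn_ord j).
rewrite eval_exactly_one_map => /andP [/hasP [w _ nu_w]].
move=> /(at_most_oneP _ _ (enum_uniq _)) nu_inj.
case: pickP => [w' nu_w' | none]; last by move: (none w) nu_w => /= ->.
apply/eqP/idP => [<- // | nu_v].
by apply: nu_inj; rewrite ?mem_enum.
Qed.

Lemma ccx_decode_suite : test_suite ccx_decode.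
Proof.
have [_ hS _ _] := hard_nu.
apply/forallP => j; rewrite /test_case (eq_eval _ (atom_true_ccx_decode j)).
exact: hS j.+1 (ltn_ord j).
Qed.

Lemma ccx_hard_reach i tau : i <= n.+1 -> nu (C i tau) ->
  nu (C 0 tau) || [exists j : 'I_n.+1, (j < i) && covers (ccx_decode j) (val tau)].
Proof.
have [_ _ ha _] := hard_nu.
elim: i => [|i IH] Hi nu_i; first by rewrite nu_i.
case nu_prev: (nu (C i tau)).
  case/orP: (IH (ltnW Hi) nu_prev) => [-> // | /existsP [j /andP [j_i cov_j]]].
  by apply/orP; right; apply/existsP; exists j; rewrite ltnS ltnW.
apply/orP; right; apply/existsP; exists (Ordinal Hi); rewrite ltnSn /=.
apply/forall_inP => a a_tau; rewrite atom_true_ccx_decode.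
by have := ha i.+1 tau a Hi a_tau nu_i; rewrite nu_prev.
Qed.

Lemma soft_cost_ccx_decode :
  #|Ta phi t| - n_covered t ccx_decode <= soft_cost (TPMSat_CCX phi t n.+1) nu.
Proof.
have [_ _ _ hc] := hard_nu.
rewrite soft_cost_ccx -card_ttup_uncovered ?ccx_decode_suite //.
apply: subset_leq_card; apply/subsetP => tau; rewrite !inE; apply: contra => nu_N.
case/orP: (ccx_hard_reach (leqnn _) nu_N) => [nu_0 | /existsP [j /andP [_ cov_j]]].
  by move: (hc tau nu_N); rewrite nu_0.
by apply/existsP; exists j.
Qed.

End Decoding.
End CCX.

Theorem proposition10 (P : finType) (D : P -> finType) (phi : form (atom D))
    (t N : nat) :
  (forall p : P, 0 < #|D p|) ->
  (exists A : assignment D, test_case phi A) ->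
  1 <= t <= #|P| ->
  1 <= N ->
  is_opt_cost (TPMSat_CCX phi t N)
              (#|Ta phi t| - tuple_number phi t N).
Proof.
move=> _ phi_sat _; case: N => // n _.
have [L suiteL covL] := tuple_number_attained t n.+1 phi_sat.
have [A0 _] := phi_sat.
split.
  exists (ccx_encode L); split; first exact/sat_hard_ccxP/ccx_encode_hard.
  by rewrite soft_cost_ccx_encode // covL.
move=> nu /sat_hard_ccxP hard_nu.
apply: leq_trans (soft_cost_ccx_decode A0 hard_nu); rewrite leq_sub2l //.
exact/n_covered_le_tuple_number/ccx_decode_suite.
Qed.
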